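(* Let $L$ be the star fork, the subfork, or the dot, and let $K,K'$ be proper pseudohexes such that $K$ is obtained from $K'$ by $L$-addition. Then $L_K$ can be safely reduced.
   Context: Pseudohex. A pseudohex is a bipartite graph $K$ (parallel edges allowed, no loops) whose edges are coloured blue, red and white, which is either empty or satisfies: (i) the blue edges form vertex-disjoint 6-cycles covering $V(K)$, called the hexagons of $K$; if a hexagon is the 6-cycle $v_0v_1\cdots v_5v_0$ we write $\bar{v_i}=v_{i+3}$ (indices mod 6); (ii) for each vertex $x$, $\{x,\bar x\}$ is a red edge of $K$ (further red edges may exist); (iii) the white edges form a perfect matching of $K$. A white edge $e=\{x,y\}$ is real if $\bar e=\{\bar x,\bar y\}$ is also a white edge and the only red edges sharing a vertex with $e$ or $\bar e$ are $\{x,\bar x\}$ and $\{y,\bar y\}$; non-real white edges are derived. An end is a red edge parallel to a white edge. $G^K$ is the graph whose vertices are the hexagons of $K$, two hexagons being adjacent iff some pair of real white edges $e,\bar e$ joins them. $K$ is proper if it has no end and $G^K$ is 2-connected with no cycle of length 2. Reduction. Let $h$ be a hexagon and $N$ one of the two perfect matchings of its blue 6-cycle. For each edge of $N$, let $P$ be the path formed by that edge and the two white edges adjacent to it. If $P$ is not a cycle of length 2, add a new white edge $e_P$ joining the end vertices of $P$, and for each red edge $\{u,w\}$ with $w$ an interior vertex of $P$ add a red edge $\{u,w'\}$ where $w'$ is the endpoint of $e_P$ in the same bipartition class as $w$. If $P$ is a cycle of length 2, then for each red edge $\{u,w\}$ with $w$ an interior vertex of $P$ add a red edge $\{u,\bar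 u\}$. Finally delete the vertices of $h$. Reducing hexagons $h_1,\dots,h_l$ by perfect matchings $N_1,\dots,N_l$ means performing these reductions successively; its contracted paths are the components (paths and cycles) of the subgraph of $K$ formed by $N_1\cup\dots\cup N_l$ together with all white edges having an endpoint in $V(h_1)\cup\dots\cup V(h_l)$. The reduction is safe if every contracted path/cycle contains at most one derived white edge of $K$; a set of hexagons can be safely reduced if some choice of perfect matchings gives a safe reduction. Fork-type graphs and addition. The star fork is $K_{1,3}$; the bold star fork has one half-edge at each of its three leaves. The subfork is a single edge (two vertices); the bold subfork has one half-edge at each of its two vertices. The dot is a single vertex; a bold dot has two or three half-edges attached to it. A graph is obtained from $G'$ by addition of the bold $L$ if it is obtained from the disjoint union of $G'$ and $L$ by joining each half-edge of the bold $L$ to a distinct vertex of degree 2 of $G'$. $K$ is obtained from $K'$ by $L$-addition if $G^K$ is obtained from $G^{K'}$ by addition of the bold $L$; $L_K$ is the set of hexagons of $K$ corresponding to the vertices of $L$. *)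

From HB Require Import structures.
From mathcomp Require Import all_boot.
From Stdlib Require Import Relations.Relation_Operators.
Set Implicit Arguments. Unset Strict Implicit. Unset Printing Implicit Defensive.

Inductive colour := Blue | Red | White.

(* Undirected multigraph: each edge e has two endpoints csrc e, ctgt e
   (the orientation is irrelevant); parallel edges are distinct edge objects. *)
Record cgraph := CGraph {
  cV : finType; cE : finType;
  csrc : cE -> cV; ctgt : cE -> cV; ccol : cE -> colour }.

Definition joins (K : cgraph) (e : cE K) (x y : cV K) : Prop :=
  (csrc e = x /\ ctgt e = y) \/ (csrc e = y /\ ctgt e = x).
Definition incident (K : cgraph) (e : cE K) (x : cV K) : Prop :=
  csrc e = x \/ ctgt e = x.
Definition is_blue (K : cgraph) (e : cE K) : Prop := ccol e = Blue.
Definition is_red (K : cgraph) (e : cE K) : Prop := ccol e = Red.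
Definition is_white (K : cgraph) (e : cE K) : Prop := ccol e = White.

Definition succ6 (i : 'I_6) : 'I_6 := inord (i.+1 %% 6).

(* c 0 c 1 ... c 5 c 0 is a blue 6-cycle (edges b i joining c i, c (i+1)),
   and the only blue edges touching its vertices are its own edges:
   i.e. this 6-cycle is a whole component of the blue subgraph. *)
Definition hexcycle (K : cgraph) (c : 'I_6 -> cV K) (b : 'I_6 -> cE K) : Prop :=
  injective c /\
  (forall i, is_blue (b i) /\ joins (b i) (c i) (c (succ6 i))) /\
  (forall e, is_blue e -> forall i, incident e (c i) -> exists j, e = b j).

(* opp K x y  :<->  y = bar x *)
Definition opp (K : cgraph) (x y : cV K) : Prop :=
  exists c b, @hexcycle K c b /\ c ord0 = x /\ c (inord 3) = y.

Definition is_hex (K : cgraph) (S : {set cV K}) : Prop :=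
  exists c b, @hexcycle K c b /\ S = [set c i | i : 'I_6].

Definition pseudohex (K : cgraph) : Prop :=
  (forall e : cE K, csrc e <> ctgt e) /\
  (exists side : cV K -> bool, forall e : cE K, side (csrc e) <> side (ctgt e)) /\
  (* (i) blue edges form vertex-disjoint 6-cycles covering V(K) *)
  (forall x : cV K, exists c b, @hexcycle K c b /\ c ord0 = x) /\
  (forall x y : cV K, opp x y -> exists r, is_red r /\ joins r x y) /\
  (forall x : cV K, exists e, is_white e /\ incident e x /\
      forall e', is_white e' -> incident e' x -> e' = e).

Definition real_white (K : cgraph) (e : cE K) : Prop :=
  is_white e /\
  exists (xb yb : cV K) (e' : cE K),
    opp (csrc e) xb /\ opp (ctgt e) yb /\ is_white e' /\ joins e' xb yb /\
    forall r, is_red r ->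
      (incident r (csrc e) \/ incident r (ctgt e) \/ incident r xb \/ incident r yb) ->
      joins r (csrc e) xb \/ joins r (ctgt e) yb.

Definition derived (K : cgraph) (e : cE K) : Prop := is_white e /\ ~ real_white e.

Definition is_end (K : cgraph) (r : cE K) : Prop :=
  is_red r /\ exists w, is_white w /\ joins w (csrc r) (ctgt r).

Definition GKjoins (K : cgraph) (e : cE K) (S T : {set cV K}) : Prop :=
  (csrc e \in S /\ ctgt e \in T) \/ (csrc e \in T /\ ctgt e \in S).

Definition GKadj (K : cgraph) (S T : {set cV K}) : Prop :=
  is_hex S /\ is_hex T /\ S <> T /\ exists e, real_white e /\ GKjoins e S T.

(* G^K has a cycle of length 2: two distinct edges {e1, bar e1}, {e2, bar e2}
   of G^K joining the same two hexagons *)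
Definition GK_2cycle (K : cgraph) : Prop :=
  exists (S T : {set cV K}) (e1 e2 : cE K),
    is_hex S /\ is_hex T /\ S <> T /\
    real_white e1 /\ real_white e2 /\ GKjoins e1 S T /\ GKjoins e2 S T /\
    e1 <> e2 /\
    ~ (exists xb yb, opp (csrc e1) xb /\ opp (ctgt e1) yb /\ joins e2 xb yb).

Definition reach_in (T : Type) (R : T -> T -> Prop) (P : T -> Prop) : T -> T -> Prop :=
  clos_refl_trans T (fun x y => P x /\ P y /\ R x y).

Definition two_connected_GK (K : cgraph) : Prop :=
  (exists S1 S2 S3 : {set cV K}, is_hex S1 /\ is_hex S2 /\ is_hex S3 /\
      S1 <> S2 /\ S1 <> S3 /\ S2 <> S3) /\
  (forall S T, is_hex S -> is_hex T -> reach_in (@GKadj K) (@is_hex K) S T) /\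
  (forall Z S T, is_hex Z -> is_hex S -> is_hex T -> S <> Z -> T <> Z ->
      reach_in (@GKadj K) (fun U => is_hex U /\ U <> Z) S T).

Definition proper_pseudohex (K : cgraph) : Prop :=
  pseudohex K /\ (forall r : cE K, ~ is_end r) /\ two_connected_GK K /\ ~ GK_2cycle K.

Inductive forktype := StarFork | Subfork | Dot.

(* vertices of L are 0 .. L_size t - 1; star fork: centre 0, leaves 1,2,3 *)
Definition L_size (t : forktype) : nat :=
  match t with StarFork => 4 | Subfork => 2 | Dot => 1 end.

Definition L_adj (t : forktype) (i j : nat) : bool :=
  match t with
  | StarFork => ((i == 0) && (j != 0)) || ((j == 0) && (i != 0))
  | Subfork => i != j
  | Dot => false
  end.

(* the list of vertices of L carrying a half-edge (with multiplicity) in the bold L *)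
Definition bold_halfedges (t : forktype) (s : seq nat) : Prop :=
  match t with
  | StarFork => s = [:: 1; 2; 3]
  | Subfork => s = [:: 0; 1]
  | Dot => s = [:: 0; 0] \/ s = [:: 0; 0; 0]
  end.

Definition deg2 (K : cgraph) (S : {set cV K}) : Prop :=
  exists A B, A <> B /\ GKadj S A /\ GKadj S B /\
    forall C, GKadj S C -> C = A \/ C = B.

(* G^K is isomorphic, via (f1, f2), to the graph obtained from G^{K'} by addition
   of the bold L: f1 maps hexagons of K' and f2 maps vertices of L to hexagons of K;
   L_K = { f2 i | i < L_size t }. *)
Definition L_addition (t : forktype) (K K' : cgraph)
    (f1 : {set cV K'} -> {set cV K}) (f2 : nat -> {set cV K}) : Prop :=
  exists (s : seq nat) (att : nat -> {set cV K'}),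
    bold_halfedges t s /\
    (forall k, k < size s -> is_hex (att k) /\ deg2 (att k)) /\
    (forall k l, k < size s -> l < size s -> att k = att l -> k = l) /\
    (forall A, is_hex A -> is_hex (f1 A)) /\
    (forall i, i < L_size t -> is_hex (f2 i)) /\
    (forall A B, is_hex A -> is_hex B -> f1 A = f1 B -> A = B) /\
    (forall i j, i < L_size t -> j < L_size t -> f2 i = f2 j -> i = j) /\
    (forall A i, is_hex A -> i < L_size t -> f1 A <> f2 i) /\
    (forall S, is_hex S ->
       (exists A, is_hex A /\ S = f1 A) \/ (exists i, i < L_size t /\ S = f2 i)) /\
    (forall A B, is_hex A -> is_hex B -> (GKadj (f1 A) (f1 B) <-> GKadj A B)) /\
    (forall i j, i < L_size t -> j < L_size t ->
       (GKadj (f2 i) (f2 j) <-> L_adj t i j)) /\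
    (forall A i, is_hex A -> i < L_size t ->
       (GKadj (f1 A) (f2 i) <->
        exists k, k < size s /\ nth 0 s k = i /\ att k = A)).

(* N is the union of the chosen perfect
   matchings N_h of the blue 6-cycles of the h in Hs; F is the edge set
   N ∪ {white edges with an endpoint in V(Hs)}, whose components are the
   contracted paths/cycles; safety: each component contains at most one
   derived white edge of K. *)
Definition safely_reducible (K : cgraph) (Hs : {set cV K} -> Prop) : Prop :=
  exists N : cE K -> Prop,
    (forall e, N e -> is_blue e /\ exists S, Hs S /\ csrc e \in S /\ ctgt e \in S) /\
    (forall S, Hs S -> forall x, x \in S ->
        exists e, N e /\ incident e x /\ forall e', N e' -> incident e' x -> e' = e) /\
    let F := fun e => N e \/ (is_white e /\ exists S, Hs S /\ (csrc e \in S \/ ctgt e \in S)) in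
    forall e1 e2, F e1 -> F e2 -> derived e1 -> derived e2 ->
      clos_refl_trans (cV K) (fun x y => exists e, F e /\ joins e x y) (csrc e1) (csrc e2) ->
      e1 = e2.

From mathcomp Require Import all_boot zify.
From Stdlib Require Import Relations.Relation_Operators Classical.
Set Implicit Arguments. Unset Strict Implicit. Unset Printing Implicit Defensive.

(* A labelling c : 'I_6 -> V of a hexagon lists its vertices along its blue
   6-cycle; position k has antipode anti k = k + 3, and the three antipodal
   pairs are the classes cls k = k mod 3.  An edge of G^K is a pair of
   antipodal real white edges between two labelled hexagons (plink), and
   distinct neighbours of a hexagon are attached at distinct classes, because
   every vertex lies on a single white edge.  Reducing hexagon i by the perfect
   matching of parity ss i contracts position k with mate (ss i) k.

   From a derived end, a contracted path alternates between matching edges and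
   real white edges.  If from every derived end in a reduced hexagon this walk
   leaves the reduced hexagons (the notion [entry]), no contracted path holds
   two derived edges (reduction_safe).  For the dot, the subfork and the star
   fork we choose the matchings so that the walk always exits (dot_safe,
   subfork_safe, star_safe); the theorem reads their hypotheses off the
   definition of L-addition. *)

Definition mk6 (n : nat) : 'I_6 := Ordinal (ltn_pmod n (isT : 0 < 6)).
Definition add6 (k m : 'I_6) : 'I_6 := mk6 (k + m).
Definition suc6 (k : 'I_6) : 'I_6 := mk6 k.+1.
Definition pred6 (k : 'I_6) : 'I_6 := mk6 (k + 5).
Definition anti (k : 'I_6) : 'I_6 := mk6 (k + 3).
Definition cls (k : 'I_6) : nat := k %% 3.
(* the perfect matching of parity s of the 6-cycle consists of the edges
   {j, j + 1} with odd j = s; edge_of s k is the edge containing k and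
   mate s k the other end of that edge *)
Definition edge_of (s : bool) (k : 'I_6) : 'I_6 := if odd k == s then k else pred6 k.
Definition mate (s : bool) (k : 'I_6) : 'I_6 := if odd k == s then suc6 k else pred6 k.

Ltac case6 k := let H := fresh in case: k => [[|[|[|[|[|[|?]]]]]] H] //.
Ltac ord_eq := apply/val_inj; reflexivity.

Lemma succ6E k : succ6 k = suc6 k.
Proof. by apply/val_inj; rewrite /succ6 /= inordK // ltn_pmod. Qed.
Lemma inord3 : (inord 3 : 'I_6) = mk6 3.
Proof. by apply/val_inj; rewrite /= inordK. Qed.
Lemma suc_add k m : suc6 (add6 k m) = add6 (suc6 k) m.
Proof. case6 k; case6 m; ord_eq. Qed.
Lemma add_inj m : injective (add6^~ m).
Proof. move=> k k'; case6 k; case6 k'; case6 m; move/(congr1 val) => //= _; ord_eq. Qed.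
Lemma add_sub (j m : 'I_6) : add6 (add6 j (mk6 (6 - m))) m = j.
Proof. case6 j; case6 m; ord_eq. Qed.
Lemma add0k k : add6 ord0 k = k.
Proof. case6 k; ord_eq. Qed.
Lemma add3k k : add6 (mk6 3) k = anti k.
Proof. case6 k; ord_eq. Qed.
Lemma antiK k : anti (anti k) = k.
Proof. case6 k; ord_eq. Qed.
Lemma suc_pred k : suc6 (pred6 k) = k.
Proof. case6 k; ord_eq. Qed.
Lemma suc_inj j k : suc6 j = k -> j = pred6 k.
Proof. case6 j; case6 k; move/(congr1 val) => //= _; ord_eq. Qed.
Lemma iter_suc (j k : 'I_6) : iter (k + 6 - j) suc6 j = k.
Proof. case6 j; case6 k; ord_eq. Qed.

Lemma cls_lt k : cls k < 3.
Proof. by rewrite /cls ltn_pmod. Qed.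
Lemma cls_anti k : cls (anti k) = cls k.
Proof. by case6 k. Qed.
Lemma cls_eq k k' : cls k = cls k' -> k' = k \/ k' = anti k.
Proof. case6 k; case6 k'; rewrite /cls /= => // _; by [left; ord_eq | right; ord_eq]. Qed.
Lemma third_cls (a b x y : 'I_6) : cls a <> cls b -> cls x <> cls a -> cls x <> cls b ->
  cls y <> cls x -> cls y = cls a \/ cls y = cls b.
Proof. by have := cls_lt a; have := cls_lt b; have := cls_lt x; have := cls_lt y; lia. Qed.

Lemma cls_cover a b c x : cls a <> cls b -> cls a <> cls c -> cls b <> cls c ->
  cls x = cls a \/ cls x = cls b \/ cls x = cls c.
Proof. by have := cls_lt a; have := cls_lt b; have := cls_lt c; have := cls_lt x; lia. Qed.

Lemma mateK s k : mate s (mate s k) = k.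
Proof. case: s; case6 k; ord_eq. Qed.
Lemma mate_cls s k : cls (mate s k) <> cls k.
Proof. by case: s; case6 k. Qed.
Lemma mate_negb s k : cls (mate (~~ s) k) <> cls (mate s k).
Proof. by case: s; case6 k. Qed.
Lemma mate_odd s k : odd (mate s k) = ~~ odd k.
Proof. by case: s; case6 k. Qed.
Lemma odd_anti k : odd (anti k) = ~~ odd k.
Proof. by case6 k. Qed.

Definition steer (k a : 'I_6) : bool := cls (mate false k) != cls a.

Lemma steerP k a : cls k <> cls a -> cls (mate (steer k a) k) = cls a.
Proof.
rewrite /steer; case: eqP => [//|e] ka; have ak : cls a <> cls k by move=> h; apply: ka.
have := third_cls ak e (@mate_cls false k) (@mate_negb false k).
by case=> // e'; case: (@mate_cls true k).
Qed.

Lemma edge_of_odd s k : odd (edge_of s k) = s.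
Proof. by case: s; case6 k. Qed.
Lemma edge_of_ends s k : k = edge_of s k \/ k = suc6 (edge_of s k).
Proof. case: s; case6 k; by [left; ord_eq | right; ord_eq]. Qed.
Lemma edge_of_self s (j : 'I_6) : odd j = s -> edge_of s j = j.
Proof. by rewrite /edge_of => ->; rewrite eqxx. Qed.
Lemma edge_of_suc s (j : 'I_6) : odd j = s -> edge_of s (suc6 j) = j.
Proof. case: s; case6 j => // _; ord_eq. Qed.
Lemma mate_edge s (j : 'I_6) : odd j = s -> mate s j = suc6 j /\ mate s (suc6 j) = j.
Proof. case: s; case6 j => // _; split; ord_eq. Qed.

Section Hexagons.
Variable K : cgraph.
Implicit Types (x y : cV K) (e : cE K) (c : 'I_6 -> cV K) (b : 'I_6 -> cE K).

Lemma joins2 e a a' x y :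
  joins e a a' -> joins e x y -> (a = x /\ a' = y) \/ (a = y /\ a' = x).
Proof. by rewrite /joins => [[[-> ->]|[-> ->]]] [[-> ->]|[-> ->]]; auto. Qed.
Lemma joins_sym e x y : joins e x y -> joins e y x.
Proof. by rewrite /joins; tauto. Qed.
Lemma joins_inc e x y : joins e x y -> incident e x.
Proof. by rewrite /joins /incident => [[[-> _]|[_ ->]]]; auto. Qed.
Lemma joins_other e x y y' : joins e x y -> joins e x y' -> y = y'.
Proof. by move=> h1 h2; case: (joins2 h1 h2) => [[_ ->]|[-> ->]]. Qed.
Lemma joins_incident e x y z : joins e x y -> incident e z -> z = x \/ z = y.
Proof. by rewrite /joins /incident => [[[-> ->]|[-> ->]]] [<-|<-]; auto. Qed.

Definition hexlab c b : Prop :=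
  injective c /\
  (forall i, is_blue (b i) /\ joins (b i) (c i) (c (suc6 i))) /\
  (forall e, is_blue e -> forall i, incident e (c i) -> exists j, e = b j).

Lemma hexlabE c b : hexcycle c b <-> hexlab c b.
Proof.
rewrite /hexcycle /hexlab; split=> [[h1 [h2 h3]]|[h1 [h2 h3]]]; do 2!split => //;
  by move=> i; move: (h2 i); rewrite ?succ6E.
Qed.

Definition img c : {set cV K} := [set c k | k in 'I_6].

Lemma hex_of (S : {set cV K}) : is_hex S -> exists c b, hexlab c b /\ S = img c.
Proof. by move=> [c [b [/hexlabE h ->]]]; exists c, b. Qed.

Definition badj x y := exists e, is_blue e /\ joins e x y.

Lemma badj_lab c b i y : hexlab c b ->
  badj (c i) y <-> y = c (suc6 i) \/ y = c (pred6 i).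
Proof.
move=> [inj [hb hc]]; split.
  move=> [e [be je]]; have [j ej] := hc e be i (joins_inc je); subst e.
  have [_ jb] := hb j.
  by case: (joins2 jb je) => [[/inj <- <-]|[<- /inj /suc_inj ->]]; auto.
move=> [->|->]; first by exists (b i); case: (hb i).
exists (b (pred6 i)); have [h1 h2] := hb (pred6 i); split => //.
by apply: joins_sym; rewrite suc_pred in h2.
Qed.

Lemma image_sub c b c' b' i j : hexlab c b -> hexlab c' b' ->
  c' j = c i -> forall k, exists m, c' k = c m.
Proof.
move=> h h' e k; rewrite -(iter_suc j k); elim: (_ + 6 - _) => [|n [m IH]] /=.
  by exists i.
have [bb jb] := h'.2.1 (iter n suc6 j).
have : badj (c m) (c' (suc6 (iter n suc6 j))) by exists (b' (iter n suc6 j)); rewrite -IH.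
by case/(badj_lab _ _ h) => ->; eexists.
Qed.

Lemma hex_meet c b c' b' i j : hexlab c b -> hexlab c' b' ->
  c' j = c i -> img c = img c'.
Proof.
move=> h h' e; apply/setP => v; apply/imsetP/imsetP => [[k _ ->]|[k _ ->]].
  by have [m ->] := image_sub h' h (esym e) k; exists m.
by have [m ->] := image_sub h h' e k; exists m.
Qed.

Lemma hex_img c b : hexlab c b -> is_hex (img c).
Proof. by move=> /hexlabE h; exists c, b. Qed.

Lemma hex_share (S T : {set cV K}) x : is_hex S -> is_hex T -> x \in S -> x \in T -> S = T.
Proof.
move=> /hex_of [c [b [h ->]]] /hex_of [c' [b' [h' ->]]] /imsetP [i _ ->] /imsetP [j _ e].
exact: hex_meet h h' (esym e).
Qed.

Definition far x y := y <> x /\ ~ badj x y /\ ~ (exists z, badj x z /\ badj z y).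

Lemma far_anti c b : hexlab c b -> far (c ord0) (c (mk6 3)).
Proof.
move=> h; have inj := h.1; split; [|split].
- by move/inj/(congr1 val).
- by case/(badj_lab _ _ h) => /inj/(congr1 val).
move=> [z [/(badj_lab _ _ h) [->|->] /(badj_lab _ _ h) [|]]] /inj/(congr1 val) //.
Qed.

Lemma far_unique c b k : hexlab c b -> far (c ord0) (c k) -> k = mk6 3.
Proof.
move=> h; case6 k; move=> [h1 [h2 h3]].
- by case: h1; congr c; ord_eq.
- by case: h2; apply/(badj_lab _ _ h); left; congr c; ord_eq.
- case: h3; exists (c (mk6 1)); split; apply/(badj_lab _ _ h); left; congr c; ord_eq.
- ord_eq.
- case: h3; exists (c (mk6 5)); split; apply/(badj_lab _ _ h); right; congr c; ord_eq.
- by case: h2; apply/(badj_lab _ _ h); right; congr c; ord_eq.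
Qed.

Lemma hexlab_rot c b m : hexlab c b ->
  hexlab (fun k => c (add6 k m)) (fun k => b (add6 k m)).
Proof.
move=> [inj [hb hc]]; split; [|split].
- by move=> x y /inj /add_inj.
- by move=> i /=; rewrite -suc_add; apply: hb.
move=> e be i /(hc e be) [j ->]; exists (add6 j (mk6 (6 - m))).
by rewrite add_sub.
Qed.

Lemma opp_intro c b k : hexlab c b -> opp (c k) (c (anti k)).
Proof.
move=> h; exists (fun j => c (add6 j k)), (fun j => b (add6 j k)); split.
  by apply/hexlabE/hexlab_rot.
by rewrite add0k inord3 add3k.
Qed.

Lemma opp_det c b k y : hexlab c b -> opp (c k) y -> y = c (anti k).
Proof.
move=> h [c' [b' [/hexlabE h' [e0 <-]]]]; rewrite inord3.
have hr := hexlab_rot k h.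
have [m em] := image_sub hr h' (etrans e0 (congr1 c (esym (add0k k)))) (mk6 3).
have far0 : far (c (add6 ord0 k)) (c (add6 m k)) by rewrite add0k -e0 -em; exact: far_anti h'.
by rewrite em (far_unique hr far0) add3k.
Qed.

Lemma opp_fun x y y' : opp x y -> opp x y' -> y = y'.
Proof.
move=> [c [b [/hexlabE h [<- <-]]]] /(opp_det h) ->.
by rewrite inord3; congr c; ord_eq.
Qed.

Lemma opp_sym x y : opp x y -> opp y x.
Proof.
move=> [c [b [/hexlabE h [<- <-]]]]; rewrite inord3.
by have := opp_intro (mk6 3) h; have -> : anti (mk6 3) = ord0 by ord_eq.
Qed.

Lemma real_bar e xb yb : real_white e ->
  opp (csrc e) xb -> opp (ctgt e) yb -> exists e', real_white e' /\ joins e' xb yb.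
Proof.
move=> [we [xb' [yb' [e' [o1 [o2 [we' [je' hr]]]]]]]] /(opp_fun o1) <- /(opp_fun o2) <-.
exists e'; split=> //; split=> //.
have red_ok r : is_red r -> incident r xb' \/ incident r yb' \/ incident r (csrc e) \/
    incident r (ctgt e) -> joins r xb' (csrc e) \/ joins r yb' (ctgt e).
  move=> rr hi; have [h|h] : joins r (csrc e) xb' \/ joins r (ctgt e) yb' by apply: hr; tauto.
    by left; apply: joins_sym.
  by right; apply: joins_sym.
case: je' => [[-> ->]|[-> ->]].
  exists (csrc e), (ctgt e), e; split; [exact: opp_sym|split; [exact: opp_sym|]].
  by do 2!split=> //; left.
exists (ctgt e), (csrc e), e; split; [exact: opp_sym|split; [exact: opp_sym|]].
by do 2!split=> //; [right | move=> r rr hi; have := red_ok r rr; tauto].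
Qed.

End Hexagons.

Section Links.
Variable K : cgraph.
Implicit Types (x y : cV K) (c : 'I_6 -> cV K) (b : 'I_6 -> cE K).

Definition white_unique : Prop := forall x (e e' : cE K),
  is_white e -> is_white e' -> incident e x -> incident e' x -> e = e'.

Lemma pseudohex_white_unique : pseudohex K -> white_unique.
Proof.
move=> [_ [_ [_ [_ hw]]]] x e e' we we' ie ie'.
by have [e0 [_ [_ u]]] := hw x; rewrite (u e) // (u e').
Qed.

Definition link x y := exists e, real_white e /\ joins e x y.

Lemma link_sym x y : link x y -> link y x.
Proof. by move=> [e [r j]]; exists e; split=> //; apply: joins_sym. Qed.

Lemma link_fun x y y' : white_unique -> link x y -> link x y' -> y = y'.
Proof.
move=> wu [e [r je]] [e' [r' je']].
have ee : e = e' := wu x e e' r.1 r'.1 (joins_inc je) (joins_inc je').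
by subst e'; apply: joins_other je je'.
Qed.

Lemma GKadj_sym (S T : {set cV K}) : GKadj S T -> GKadj T S.
Proof.
move=> [hS [hT [ne [e [r hj]]]]]; do 3 split => //; first by move/esym.
by exists e; split=> //; case: hj; rewrite /GKjoins; tauto.
Qed.

Definition plink c c' k m := link (c k) (c' m) /\ link (c (anti k)) (c' (anti m)).

Lemma plink_anti c c' k m : plink c c' k m -> plink c c' (anti k) (anti m).
Proof. by rewrite /plink !antiK => [[? ?]]. Qed.

Lemma plink_sym c c' k m : plink c c' k m -> plink c' c m k.
Proof. by move=> [? ?]; split; apply: link_sym. Qed.

Lemma plink_even c c' k m : plink c c' k m -> exists k' m', plink c c' k' m' /\ ~~ odd k'.
Proof.
case odd_k: (odd k) => pl; last by exists k, m; rewrite odd_k.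
by exists (anti k), (anti m); rewrite odd_anti odd_k; split; first exact: plink_anti.
Qed.

Lemma plink_cls c c' k m j : plink c c' k m -> cls j = cls k ->
  exists y, link (c j) y /\ (y = c' m \/ y = c' (anti m)).
Proof. by move=> [l1 l2] /esym /cls_eq [->|->]; [exists (c' m) | exists (c' (anti m))]; tauto. Qed.

Lemma adj_plink c b c' b' (S T : {set cV K}) : hexlab c b -> S = img c ->
  hexlab c' b' -> T = img c' -> GKadj S T -> exists k m, plink c c' k m.
Proof.
move=> h -> h' -> [_ [_ [_ [e [r hj]]]]].
have bar x y xb yb : csrc e = x -> ctgt e = y -> opp x xb -> opp y yb -> link xb yb.
  by move=> <- <- o1 o2; have [e' [r' j']] := real_bar r o1 o2; exists e'.
case: hj => [[/imsetP [k _ ek] /imsetP [m _ em]]|[/imsetP [m _ em] /imsetP [k _ ek]]];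
  exists k, m; split.
- by exists e; split=> //; rewrite -ek -em; left.
- exact: bar ek em (opp_intro k h) (opp_intro m h').
- by exists e; split=> //; rewrite -ek -em; right.
- exact/link_sym/(bar _ _ _ _ em ek (opp_intro m h') (opp_intro k h)).
Qed.

End Links.

Lemma crt_invariant (T : Type) (R : T -> T -> Prop) (P : T -> Prop) :
  (forall x y, R x y -> P x -> P y) -> forall x y, clos_refl_trans T R x y -> P x -> P y.
Proof. by move=> hs x y; elim=> [a b /hs|a|a b c _ IH1 _ IH2] //; auto. Qed.

(* The reduced hexagons are H 0, ..., H (n - 1), labelled by cc and bb, and
   hexagon i is reduced by the matching of parity ss i. *)
Section Reduction.
Variables (K : cgraph) (n : nat) (H : nat -> {set cV K}).
Variables (cc : nat -> 'I_6 -> cV K) (bb : nat -> 'I_6 -> cE K) (ss : nat -> bool).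
Hypothesis lab : forall i, i < n -> hexlab (cc i) (bb i).
Hypothesis Himg : forall i, i < n -> H i = img (cc i).
Hypothesis Hinj : forall i j, i < n -> j < n -> H i = H j -> i = j.
Hypothesis wu : white_unique K.

Definition Nred (e : cE K) : Prop := exists i, i < n /\ exists j, e = bb i j /\ odd j = ss i.

Definition Fred (e : cE K) : Prop := Nred e \/
  (is_white e /\ exists S, (exists i, i < n /\ S = H i) /\ (csrc e \in S \/ ctgt e \in S)).

Definition step (x y : cV K) : Prop := exists e, Fred e /\ ~ derived e /\ joins e x y.
Definition dend (x : cV K) : Prop := exists e, Fred e /\ derived e /\ incident e x.
Definition outside (z : cV K) : Prop := forall i k, i < n -> cc i k <> z.

Lemma cc_same i j k m : i < n -> j < n -> cc i k = cc j m -> i = j /\ k = m.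
Proof.
move=> ilt jlt e.
have ij : i = j by apply: Hinj; rewrite ?Himg //; exact: hex_meet (lab ilt) (lab jlt) (esym e).
by subst j; split=> //; apply: (lab ilt).1 e.
Qed.

Lemma inside_or_outside (x : cV K) : (exists i k, i < n /\ x = cc i k) \/ outside x.
Proof.
case: (classic (exists i k, i < n /\ x = cc i k)) => h; [by left | right].
by move=> i k ilt e; apply: h; exists i, k.
Qed.

Lemma Nred_ends e v w : Nred e -> joins e v w ->
  exists i k, i < n /\ v = cc i k /\ w = cc i (mate (ss i) k).
Proof.
move=> [i [ilt [j [-> oj]]]] je; have [_ jb] := (lab ilt).2.1 j.
have [m1 m2] := mate_edge oj; exists i.
by case: (joins2 jb je) => [[<- <-]|[<- <-]]; [exists j | exists (suc6 j)]; rewrite ?m1 ?m2.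
Qed.

Lemma step_cases v w : step v w ->
  (exists i k, i < n /\ v = cc i k /\ w = cc i (mate (ss i) k)) \/ link v w.
Proof.
move=> [e [[hN|[we _]] [nd je]]]; first by left; exact: Nred_ends hN je.
by right; exists e; split=> //; apply: NNPP => nr; apply: nd.
Qed.

Lemma dend_nolink x y : dend x -> link x y -> False.
Proof.
move=> [d [_ [[wd nd] id]]] [e [r je]].
have de : d = e := wu wd r.1 id (joins_inc je).
by apply: nd; rewrite de.
Qed.

(* C is a union of pieces of contracted paths that can only be entered at y:
   C is closed under the matchings and every other vertex of C is linked
   by a real white edge inside C *)
Definition entry (y : cV K) : Prop := exists C : cV K -> Prop, C y /\
  (forall v, C v -> v <> y -> exists z, C z /\ link v z) /\
  (forall i k, i < n -> C (cc i k) -> C (cc i (mate (ss i) k))).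

Lemma entry_out z : outside z -> entry z.
Proof.
move=> hz; exists (fun v => v = z); split=> //; split=> [v -> //|i k ilt e].
by case: (hz i k ilt).
Qed.

Lemma entry_step i k y : i < n ->
  link (cc i (mate (ss i) k)) y -> entry y -> entry (cc i k).
Proof.
move=> ilt l [C [Cy [Clink Cmate]]].
exists (fun v => C v \/ v = cc i k \/ v = cc i (mate (ss i) k)); split; first by right; left.
split=> [v hv vk|j m jlt].
  case: hv => [Cv|[//|->]]; last by exists y; split=> //; left.
  case: (classic (v = y)) => [->|vy].
    by exists (cc i (mate (ss i) k)); split; [right; right | exact: link_sym].
  by have [z [Cz lz]] := Clink v Cv vy; exists z; split=> //; left.
case=> [Cm|[/(cc_same jlt ilt) [-> ->]|/(cc_same jlt ilt) [-> ->]]].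
- by left; apply: Cmate.
- by right; right.
- by right; left; rewrite mateK.
Qed.

Lemma entry_dend x y : dend x -> entry x -> clos_refl_trans _ step x y -> dend y -> y = x.
Proof.
move=> dx [C [Cx [Clink Cmate]]] xy dy.
have closed v w : step v w -> C v -> C w.
  move=> /step_cases [[i [k [ilt [-> ->]]]] Cv|lvw Cv]; first exact: Cmate.
  case: (classic (v = x)) => [vx|vx]; first by subst v; case: (dend_nolink dx lvw).
  by have [z [Cz lz]] := Clink v Cv vx; rewrite (link_fun wu lvw lz).
apply: NNPP => yx; have [z [_ lz]] := Clink y (crt_invariant closed xy Cx) yx.
exact: dend_nolink dy lz.
Qed.

Lemma Nred_blue e : Nred e ->
  is_blue e /\ exists S, (exists i, i < n /\ S = H i) /\ csrc e \in S /\ ctgt e \in S.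
Proof.
move=> [i [ilt [j [-> _]]]]; have [bl jb] := (lab ilt).2.1 j.
split=> //; exists (H i); split; first by exists i.
by rewrite Himg //; case: jb => [[-> ->]|[-> ->]]; split; apply: imset_f.
Qed.

Lemma Nred_perfect i x : i < n -> x \in H i ->
  exists e, Nred e /\ incident e x /\ forall e', Nred e' -> incident e' x -> e' = e.
Proof.
move=> ilt; rewrite Himg // => /imsetP [k _ ->].
have [_ jb] := (lab ilt).2.1 (edge_of (ss i) k).
exists (bb i (edge_of (ss i) k)); split.
  by exists i; split=> //; exists (edge_of (ss i) k); rewrite edge_of_odd.
split.
  case: (edge_of_ends (ss i) k) => ek; rewrite {2}ek.
    exact: joins_inc jb.
  exact: joins_inc (joins_sym jb).
move=> e' [i' [i'lt [j' [-> oj]]]] ie; have [_ jb'] := (lab i'lt).2.1 j'.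
case: (joins_incident jb' ie) => /(cc_same ilt i'lt) [ii ->]; subst i'.
- by rewrite edge_of_self.
- by rewrite edge_of_suc.
Qed.

Lemma derived_unique : (forall x, dend x -> entry x) -> forall e1 e2,
  Fred e1 -> Fred e2 -> derived e1 -> derived e2 ->
  clos_refl_trans _ (fun x y => exists e, Fred e /\ joins e x y) (csrc e1) (csrc e2) ->
  e1 = e2.
Proof.
move=> hent e1 e2 F1 F2 d1 d2 walk.
have end1 u : u = csrc e1 \/ u = ctgt e1 -> dend u.
  by move=> hu; exists e1; do 2!split=> //; case: hu => ->; [left|right].
have at_end u e : u = csrc e1 \/ u = ctgt e1 -> derived e -> incident e u -> e = e1.
  by move=> hu de ie; apply: (wu de.1 d1.1 ie); case: hu => ->; [left|right].
pose P v := exists u, (u = csrc e1 \/ u = ctgt e1) /\ clos_refl_trans _ step u v.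
have back v : P v -> dend v -> v = csrc e1 \/ v = ctgt e1.
  by move=> [u [hu uv]] dv; rewrite (entry_dend (end1 u hu) (hent u (end1 u hu)) uv dv).
have : P (csrc e2).
  apply: (crt_invariant _ walk); last by exists (csrc e1); split; [left | apply: rt_refl].
  move=> a b [e [Fe je]] Pa; case: (classic (derived e)) => de; last first.
    have [u [hu ua]] := Pa; exists u; split=> //.
    by apply: rt_trans ua (rt_step _ _ _ _ _); exists e.
  have ha := back a Pa (ex_intro _ e (conj Fe (conj de (joins_inc je)))).
  have ee := at_end a e ha de (joins_inc je); subst e.
  exists b; split; last exact: rt_refl.
  by case: je => [[_ <-]|[<- _]]; [right|left].
have d2s : dend (csrc e2) by exists e2; do 2!split=> //; left.
move=> /back /(_ d2s) hu.
by apply/esym/(at_end _ e2 hu d2); left.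
Qed.

Definition linked i a : Prop := forall r, cls r = cls a -> exists y, link (cc i r) y.
Definition exit i a : Prop := forall r, cls r = cls a -> exists z, link (cc i r) z /\ outside z.

Lemma exit_linked i a : exit i a -> linked i a.
Proof. by move=> ex r /ex [z [l _]]; exists z. Qed.

Lemma plink_linked i c' k m : plink (cc i) c' k m -> linked i k.
Proof. by move=> pl r /(plink_cls pl) [y [l _]]; exists y. Qed.

Definition nbr i k (T : {set cV K}) : Prop :=
  forall r, cls r = cls k -> exists y, link (cc i r) y /\ y \in T.

Lemma adj_nbr i T : i < n -> GKadj (H i) T -> exists k, nbr i k T.
Proof.
move=> ilt adj; have [c [b [h eT]]] := hex_of adj.2.1.
have [k [m pl]] := adj_plink (lab ilt) (Himg ilt) h eT adj.
exists k => r /(plink_cls pl) [y [l hy]]; exists y; split=> //.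
by rewrite eT; case: hy => ->; apply: imset_f.
Qed.

Lemma adj_plink_cc i j : i < n -> j < n -> GKadj (H i) (H j) ->
  exists k l, plink (cc i) (cc j) k l.
Proof. by move=> ilt jlt; apply: adj_plink (lab ilt) (Himg ilt) (lab jlt) (Himg jlt). Qed.

Lemma plink_nbr i j k l : j < n -> plink (cc i) (cc j) k l -> nbr i k (H j).
Proof.
move=> jlt pl r /(plink_cls pl) [y [lk hy]]; exists y; split=> //.
by rewrite Himg //; case: hy => ->; apply: imset_f.
Qed.

Lemma nbr_cls_neq i k k' T T' : is_hex T -> is_hex T' -> T <> T' ->
  nbr i k T -> nbr i k' T' -> cls k <> cls k'.
Proof.
move=> hT hT' ne nk nk' ekk'; have [y [l yT]] := nk k erefl.
have [y' [l' yT']] := nk' k ekk'; apply: ne; apply: hex_share hT hT' yT _.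
by rewrite (link_fun wu l l').
Qed.

Lemma nbr_exit i k T : is_hex T -> (forall j, j < n -> T <> H j) -> nbr i k T -> exit i k.
Proof.
move=> hT out nk r /nk [y [l yT]]; exists y; split=> // j m jlt e.
apply: (out j jlt); apply: hex_share hT _ yT _; rewrite Himg //.
  exact: hex_img (lab jlt).
by rewrite -e; apply: imset_f.
Qed.

(* hexagon j is attached to hexagon i and to a hexagon T that is not reduced;
   the position mu of i facing j can be taken even (as entry_centre needs) *)
Lemma pendant i j T : i < n -> j < n -> GKadj (H i) (H j) -> GKadj (H j) T ->
  (forall h, h < n -> T <> H h) ->
  exists mu kk a, [/\ plink (cc i) (cc j) mu kk, ~~ odd mu, exit j a & cls kk <> cls a].
Proof.
move=> ilt jlt adj adjT out; have [k0 [l0 p0]] := adj_plink_cc ilt jlt adj.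
have [mu [kk [p ev]]] := plink_even p0; have [a na] := adj_nbr jlt adjT.
exists mu, kk, a; split=> //; first exact: nbr_exit adjT.2.1 out na.
exact (nbr_cls_neq adj.1 adjT.2.1 (nesym (out i ilt)) (plink_nbr ilt (plink_sym p)) na).
Qed.

Lemma dend_linked i m a : dend (cc i m) -> linked i a -> cls m <> cls a.
Proof. by move=> dx la /la [y l]; apply: dend_nolink dx l. Qed.

Lemma entry_exit i m a : i < n -> exit i a -> cls (mate (ss i) m) = cls a -> entry (cc i m).
Proof.
move=> ilt ex /ex [z [l hz]]; exact: entry_step ilt l (entry_out hz).
Qed.

Lemma entry_two_exits i a b m : i < n -> exit i a -> exit i b -> cls a <> cls b ->
  dend (cc i m) -> entry (cc i m).
Proof.
move=> ilt ea eb ab dx.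
have ma := dend_linked dx (exit_linked ea); have mb := dend_linked dx (exit_linked eb).
by case: (third_cls ab ma mb (@mate_cls (ss i) m)); apply: entry_exit.
Qed.

Lemma entry_leaf i a c' k l m : i < n -> exit i a -> plink (cc i) c' k l ->
  cls (mate (ss i) (anti k)) = cls a -> entry (c' l) -> dend (cc i m) -> entry (cc i m).
Proof.
move=> ilt ea pl steer_a el dx.
have ka : cls k <> cls a by rewrite -steer_a -(cls_anti k) => /esym; apply: mate_cls.
have ma := dend_linked dx (exit_linked ea); have mk := dend_linked dx (plink_linked pl).
case: (third_cls (nesym ka) ma mk (@mate_cls (ss i) m)); first exact: entry_exit.
case/esym/cls_eq => e; last by case: ma; rewrite -(mateK (ss i) m) e.
by apply: entry_step ilt _ el; rewrite e; exact: pl.1.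
Qed.

(* the centre i0 of a star, reduced by a matching of parity false: its even
   positions mu j, whose classes cover all positions, face leaves j whose
   matchings send the antipode of the facing position to an exit; the
   matching of the centre then leads from one leaf to another one *)
Lemma entry_centre i0 (J : nat -> Prop) (mu kk a : nat -> 'I_6) j :
  i0 < n -> ss i0 = false ->
  (forall j, J j -> [/\ j < n, plink (cc i0) (cc j) (mu j) (kk j), ~~ odd (mu j),
     exit j (a j) & cls (mate (ss j) (anti (kk j))) = cls (a j)]) ->
  (forall x, exists j, J j /\ cls x = cls (mu j)) ->
  J j -> entry (cc i0 (mu j)).
Proof.
move=> i0lt s0 leaf cover Jj.
have [h [Jh e]] := cover (mate false (mu j)); have [hlt ph evh exh sth] := leaf h Jh.
case/esym/cls_eq: e => eh.
  by have [_ _ evj _ _] := leaf j Jj; move: evh; rewrite -eh mate_odd negbK (negbTE evj).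
apply: entry_step i0lt _ (entry_exit hlt exh sth).
by rewrite s0 eh; exact: ph.2.
Qed.

Lemma reduction_safe : (forall i m, i < n -> dend (cc i m) -> entry (cc i m)) ->
  @safely_reducible K (fun S => exists i, i < n /\ S = H i).
Proof.
move=> hin.
have hent x : dend x -> entry x.
  by case: (inside_or_outside x) => [[i [k [ilt ->]]]|/entry_out] //; apply: hin.
exists Nred; split; first exact: Nred_blue.
split; first by move=> S [i [ilt ->]] x; apply: Nred_perfect.
exact: derived_unique hent.
Qed.

End Reduction.

Lemma fin_choice (A : Type) (a0 : A) n (P : nat -> A -> Prop) :
  (forall i, i < n -> exists a, P i a) -> exists f : nat -> A, forall i, i < n -> P i (f i).
Proof.
elim: n => [|n IH] hP; first by exists (fun _ => a0).
have [f hf] := IH (fun i ilt => hP i (ltnW ilt)).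
have [a ha] := hP n (ltnSn n).
exists (fun i => if i == n then a else f i) => i; rewrite ltnS leq_eqVlt.
by case/orP => [/eqP ->|ilt]; [rewrite eqxx | rewrite (ltn_eqF ilt); apply: hf].
Qed.

Lemma labelled_hexagons (K : cgraph) n (H : nat -> {set cV K}) :
  (forall i, i < n.+1 -> is_hex (H i)) ->
  exists cc bb, forall i, i < n.+1 -> hexlab (cc i) (bb i) /\ H i = img (cc i).
Proof.
move=> hH; have [c0 [b0 _]] := hex_of (hH 0 isT).
have [f hf] := @fin_choice _ (c0, b0) n.+1
  (fun i p => hexlab p.1 p.2 /\ H i = img p.1)
  (fun i ilt => let: ex_intro c (ex_intro b hcb) := hex_of (hH i ilt) in ex_intro _ (c, b) hcb).
by exists (fun i => (f i).1), (fun i => (f i).2).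
Qed.

Lemma dot_safe (K : cgraph) (H : nat -> {set cV K}) (A B : {set cV K}) :
  pseudohex K -> GKadj (H 0) A -> GKadj (H 0) B -> A <> B ->
  @safely_reducible K (fun S => exists i, i < 1 /\ S = H i).
Proof.
move=> phK adjA adjB AB; have wu := pseudohex_white_unique phK.
case: (@labelled_hexagons K 0 H) => [[] // _|cc [bb hcc]]; first exact: adjA.1.
have lab i (ilt : i < 1) := (hcc i ilt).1; have Himg i (ilt : i < 1) := (hcc i ilt).2.
have Hinj i j : i < 1 -> j < 1 -> H i = H j -> i = j by case: i; case: j.
have out T : GKadj (H 0) T -> forall j, j < 1 -> T <> H j.
  by case=> _ [_ [ne _]] [] // _ /esym.
have [kA nA] := adj_nbr lab Himg (isT : 0 < 1) adjA.
have [kB nB] := adj_nbr lab Himg (isT : 0 < 1) adjB.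
apply: (reduction_safe (ss := fun _ => false) lab Himg Hinj wu) => [[]] // m _.
apply: (entry_two_exits lab Himg Hinj wu (isT : 0 < 1)
  (nbr_exit lab Himg adjA.2.1 (out A adjA) nA) (nbr_exit lab Himg adjB.2.1 (out B adjB) nB)).
exact (nbr_cls_neq wu adjA.2.1 adjB.2.1 AB nA nB).
Qed.

Lemma subfork_safe (K : cgraph) (H : nat -> {set cV K}) (A B : {set cV K}) :
  pseudohex K -> GKadj (H 0) (H 1) -> GKadj (H 0) A -> GKadj (H 1) B ->
  A <> H 1 -> B <> H 0 ->
  @safely_reducible K (fun S => exists i, i < 2 /\ S = H i).
Proof.
move=> phK adj01 adjA adjB A1 B0; have wu := pseudohex_white_unique phK.
have [hH0 [hH1 [ne01 _]]] := adj01.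
case: (@labelled_hexagons K 1 H) => [[|[|[]]] //|cc [bb hcc]].
have lab i (ilt : i < 2) := (hcc i ilt).1; have Himg i (ilt : i < 2) := (hcc i ilt).2.
have Hinj i j : i < 2 -> j < 2 -> H i = H j -> i = j.
  by case: i => [|[|[]]] // _; case: j => [|[|[]]] // _ e; case: ne01.
have [k [l p01]] := adj_plink_cc lab Himg (isT : 0 < 2) (isT : 1 < 2) adj01.
have [kA nA] := adj_nbr lab Himg (isT : 0 < 2) adjA.
have [kB nB] := adj_nbr lab Himg (isT : 1 < 2) adjB.
have outA j : j < 2 -> A <> H j by case: j => [|[|[]]] // _ e; case: adjA.2.2.1.
have outB j : j < 2 -> B <> H j by case: j => [|[|[]]] // _ e; case: adjB.2.2.1.
have exA : exit 2 cc 0 kA := nbr_exit lab Himg adjA.2.1 outA nA.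
have exB : exit 2 cc 1 kB := nbr_exit lab Himg adjB.2.1 outB nB.
have s0 : cls (mate (steer (anti k) kA) (anti k)) = cls kA.
  apply: steerP; rewrite cls_anti.
  exact (nbr_cls_neq wu hH1 adjA.2.1 (nesym A1) (plink_nbr Himg (isT : 1 < 2) p01) nA).
have s1 : cls (mate (steer l kB) l) = cls kB.
  apply: steerP.
  have n10 := plink_nbr Himg (isT : 0 < 2) (plink_sym p01).
  exact (nbr_cls_neq wu hH0 adjB.2.1 (nesym B0) n10 nB).
pose ss i := if i == 0 then steer (anti k) kA else steer l kB.
apply: (reduction_safe (ss := ss) lab Himg Hinj wu) => [[|[|[]]]] // m _.
  apply: (entry_leaf lab Himg Hinj wu _ exA p01 s0) => //.
  exact: (entry_exit lab Himg Hinj (isT : 1 < 2) exB s1).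
apply: (entry_leaf lab Himg Hinj wu _ exB (plink_anti (plink_sym p01))); rewrite ?antiK //.
exact: (entry_exit lab Himg Hinj (isT : 0 < 2) exA s0).
Qed.

Lemma star_safe (K : cgraph) (H A : nat -> {set cV K}) :
  pseudohex K -> (forall i j, i < 4 -> j < 4 -> H i = H j -> i = j) ->
  (forall j, 0 < j < 4 -> GKadj (H 0) (H j)) ->
  (forall j, 0 < j < 4 -> GKadj (H j) (A j)) ->
  (forall j i, 0 < j < 4 -> i < 4 -> A j <> H i) ->
  @safely_reducible K (fun S => exists i, i < 4 /\ S = H i).
Proof.
move=> phK Hinj adjC adjA outA; have wu := pseudohex_white_unique phK.
case: (@labelled_hexagons K 3 H) => [[|i] ilt|cc [bb hcc]].
- exact: (adjC 1 isT).1.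
- exact: (adjC i.+1 ilt).2.1.
have lab i (ilt : i < 4) := (hcc i ilt).1; have Himg i (ilt : i < 4) := (hcc i ilt).2.
case: (@fin_choice _ (ord0, ord0, ord0) 4 (fun j p => 0 < j ->
    [/\ plink (cc 0) (cc j) p.1.1 p.1.2, ~~ odd p.1.1, exit 4 cc j p.2 & cls p.1.2 <> cls p.2]))
  => [[|j] jlt|f hf]; first by exists (ord0, ord0, ord0).
  have [mu [kk [a hp]]] := pendant lab Himg wu (isT : 0 < 4) jlt
    (adjC j.+1 jlt) (adjA j.+1 jlt) (fun h => outA j.+1 h jlt).
  by exists (mu, kk, a).
pose mu j := (f j).1.1; pose kk j := (f j).1.2; pose a j := (f j).2.
pose ss j := if j == 0 then false else steer (anti (kk j)) (a j).
have leaf j : 0 < j < 4 -> [/\ j < 4, plink (cc 0) (cc j) (mu j) (kk j), ~~ odd (mu j),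
    exit 4 cc j (a j) & cls (mate (ss j) (anti (kk j))) = cls (a j)].
  case/andP=> j0 jlt; have [p ev ex ka] := hf j jlt j0; split=> //.
  by rewrite /ss eqn0Ngt j0 /=; apply: steerP; rewrite cls_anti.
have mu_cls i j : 0 < i < 4 -> 0 < j < 4 -> i <> j -> cls (mu i) <> cls (mu j).
  move=> hi hj ij; have [ilt pi _ _ _] := leaf i hi; have [jlt pj _ _ _] := leaf j hj.
  exact (nbr_cls_neq wu (adjC i hi).2.1 (adjC j hj).2.1 (fun e => ij (Hinj i j ilt jlt e))
    (plink_nbr Himg ilt pi) (plink_nbr Himg jlt pj)).
have cover x : exists j, 0 < j < 4 /\ cls x = cls (mu j).
  have m12 : cls (mu 1) <> cls (mu 2) by apply: mu_cls.
  have m13 : cls (mu 1) <> cls (mu 3) by apply: mu_cls.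
  have m23 : cls (mu 2) <> cls (mu 3) by apply: mu_cls.
  by case: (cls_cover x m12 m13 m23) => [e|[e|e]]; [exists 1 | exists 2 | exists 3].
apply: (reduction_safe (ss := ss) lab Himg Hinj wu) => [[|i]] m ilt dx.
  have [j [hj e]] := cover m; have [_ pj _ _ _] := leaf j hj.
  by case: (dend_linked wu dx (plink_linked pj) e).
have [_ p _ ex st] := leaf i.+1 ilt.
apply: (entry_leaf lab Himg Hinj wu ilt ex (plink_sym p) st _ dx).
have J_ilt : 0 < i.+1 < 4 := ilt.
exact: (entry_centre lab Himg Hinj (isT : 0 < 4) (erefl : ss 0 = false) leaf cover J_ilt).
Qed.

Theorem mainTheorem7 (t : forktype) (K K' : cgraph)
    (f1 : {set cV K'} -> {set cV K}) (f2 : nat -> {set cV K}) :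
  @proper_pseudohex K -> @proper_pseudohex K' -> @L_addition t K K' f1 f2 ->
  @safely_reducible K (fun S => exists i, i < L_size t /\ S = f2 i).
Proof.
move=> [phK _] _ [s [att [hs [hatt [attinj [_ [_ [f1inj [f2inj [f12 [_ [_ [adj22 adj12]]]]]]]]]]]]].
have half k : k < size s -> nth 0 s k < L_size t -> GKadj (f2 (nth 0 s k)) (f1 (att k)).
  by move=> ks ns; apply/GKadj_sym/(adj12 _ _ (hatt k ks).1 ns); exists k.
have outer k i : k < size s -> i < L_size t -> f1 (att k) <> f2 i.
  by move=> ks; apply: f12 (hatt k ks).1.
clear f12 adj12; case: t hs f2inj adj22 half outer => /= hs f2inj adj22 half outer.
- subst s; apply: (star_safe (A := fun j => f1 (att j.-1)) phK f2inj).
  + by case=> [|[|[|[|j]]]] // _; apply/adj22.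
  + by case=> [|[|[|[|j]]]] // _; [exact: (half 0) | exact: (half 1) | exact: (half 2)].
  + by case=> [|j] i // /andP [_ jlt]; apply: outer.
- subst s; apply: (subfork_safe (A := f1 (att 0)) (B := f1 (att 1)) phK).
  + exact/adj22.
  + exact: (half 0).
  + exact: (half 1).
  + exact: (outer 0 1).
  + exact: (outer 1 0).
have s1 : 1 < size s by case: hs => ->.
have [n0 n1] : nth 0 s 0 = 0 /\ nth 0 s 1 = 0 by case: hs => ->.
apply: (dot_safe (A := f1 (att 0)) (B := f1 (att 1)) phK).
- by have := half 0 (ltnW s1); rewrite n0; apply.
- by have := half 1 s1; rewrite n1; apply.
by move/(f1inj _ _ (hatt 0 (ltnW s1)).1 (hatt 1 s1).1)/(attinj 0 1 (ltnW s1) s1).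
Qed.
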